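(* Consider $N\ge2$ agents $x_i(k+1)=Ax_i(k)+Bu_i(k)$, $y_i(k)=Cx_i(k)$, $i=1,\dots,N$, where all eigenvalues of $A$ lie in the closed unit disc, $(A,B)$ is stabilizable and $(C,A)$ is detectable. Let $K$ be such that $A-BK$ is Schur stable and $H$ be such that $A-HC$ is Schur stable. Each agent $i$ uses the protocol $$\begin{aligned}\eta_i(k+1)&=A\eta_i(k)+Bu_i(k)+A\hat x_i(k)-A\hat\zeta_i(k),\\ \hat x_i(k+1)&=A\hat x_i(k)-BK\hat\zeta_i(k)+H(\zeta_i(k)-C\hat x_i(k)),\\ u_i(k)&=-K\eta_i(k),\end{aligned}$$ with $\zeta_i(k)=\sum_{j=1}^N d_{ij}(y_i(k)-y_j(k))$ and $\hat\zeta_i(k)=\sum_{j=1}^N d_{ij}(\eta_i(k)-\eta_j(k))$. Then for every $N$, every weighted directed graph on $N$ nodes containing a directed spanning tree, and all initial conditions, $\lim_{k\to\infty}(x_i(k)-x_j(k))=0$ for all $i,j$. In particular, the scalable state synchronization problem with localized information exchange (partial-state coupling) is solvable by a protocol designed using only $(C,A,B)$.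
   Context: The network is a weighted directed graph with adjacency matrix $[a_{ij}]$, $a_{ij}\ge0$, $a_{ii}=0$ ($a_{ij}>0$ means an edge from $j$ to $i$); weighted in-degree $d_{in}(i)=\sum_j a_{ij}$. The row stochastic matrix $D=[d_{ij}]$ is given by $d_{ij}=a_{ij}/(1+d_{in}(i))$ for $j\ne i$ and $d_{ii}=1/(1+d_{in}(i))$, so $\zeta_i=\frac{1}{1+d_{in}(i)}\sum_j a_{ij}(y_i-y_j)$. Schur stable means all eigenvalues in the open unit disc. A directed spanning tree is a subgraph containing all nodes in which every node except one root has exactly one parent. *)

From HB Require Import structures.
From mathcomp Require Import all_boot all_order all_algebra.
From mathcomp Require Import complex.
From mathcomp Require Import all_classical all_reals all_analysis.
Set Implicit Arguments. Unset Strict Implicit. Unset Printing Implicit Defensive.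
Import Order.TTheory GRing.Theory Num.Theory.
Local Open Scope ring_scope.
Local Open Scope complex_scope.

Definition cmx (R : rcfType) (n : nat) (M : 'M[R]_n) : 'M[R[i]]_n :=
  map_mx (fun x : R => x%:C) M.

Definition schur_stable (R : rcfType) (n : nat) (M : 'M[R]_n) : Prop :=
  forall l : R[i], eigenvalue (cmx M) l -> `|l| < 1.

Definition eigs_in_closed_unit_disc (R : rcfType) (n : nat) (M : 'M[R]_n) : Prop :=
  forall l : R[i], eigenvalue (cmx M) l -> `|l| <= 1.

Definition stabilizable (R : rcfType) (n m : nat) (A : 'M[R]_n) (B : 'M[R]_(n, m)) : Prop :=
  exists F : 'M[R]_(m, n), schur_stable (A + B *m F).

Definition detectable (R : rcfType) (n p : nat) (C : 'M[R]_(p, n)) (A : 'M[R]_n) : Prop :=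
  exists L : 'M[R]_(n, p), schur_stable (A + L *m C).

(* Weighted digraph adjacency: a i j >= 0, a i i = 0; a i j > 0 is an edge j -> i. *)
Definition adjacency (R : numDomainType) (N : nat) (a : 'M[R]_N) : Prop :=
  (forall i j, 0 <= a i j) /\ (forall i, a i i = 0).

(* Contains a directed spanning tree: a root r and a parent map par such that
   every non-root node i has the edge par i -> i (a i (par i) > 0), and
   following parents from any node reaches the root (no cycles). *)
Definition has_spanning_tree (R : numDomainType) (N : nat) (a : 'M[R]_N) : Prop :=
  exists (r : 'I_N) (par : 'I_N -> 'I_N),
    (forall i, i != r -> 0 < a i (par i)) /\
    (forall i, exists k : nat, iter k par i = r).

Definition din (R : ringType) (N : nat) (a : 'M[R]_N) (i : 'I_N) : R :=
  \sum_(j < N) a i j.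

Definition Dmat (R : fieldType) (N : nat) (a : 'M[R]_N) : 'M[R]_N :=
  \matrix_(i, j) (if i == j then (1 + din a i)^-1 else a i j / (1 + din a i)).

From HB Require Import structures.
From mathcomp Require Import all_boot all_order all_algebra.
From mathcomp Require Import complex.
From mathcomp Require Import all_classical all_reals all_analysis.
From mathcomp Require Import ring lra.
Import Order.TTheory GRing.Theory Num.Theory.
Import numFieldNormedType.Exports.
Set Implicit Arguments. Unset Strict Implicit. Unset Printing Implicit Defensive.
Local Open Scope ring_scope.
Local Open Scope complex_scope.
Local Open Scope classical_set_scope.

(* Stack the agent states as the columns of n x N matrices X, E (the protocol
   states eta) and Xh (the estimates), and let Dt = D^T and L = 1 - Dt, so that
   the neighbourhood disagreements are the columns of X L.  The stacked closed
   loop reduces to three cascaded recursions: the estimation error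
   e = X L - Xh obeys e' = (A - HC) e; the protocol error xi = X L - E L obeys
   xi' = A xi Dt + A e L; and X L obeys (X L)' = (A - BK) X L + BK xi.
   The first and third are Schur stable.  The middle one is handled with the
   spectral structure of D: over a graph with a directed spanning tree every
   eigenvalue of D other than 1 lies in the open unit disc (Gershgorin) and
   the eigenvalue 1 is semisimple (maximum principle), so 1 - Dt is
   annihilated by a product of factors Dt - z with |z| < 1; each such factor
   turns the recursion for xi into one driven by the stable matrix z A.
   Finally x_i - x_j = X (e_i - e_j) and e_i - e_j lies in the range of L. *)

Notation nm := (@Normc.normc _).

Section ComplexModulus.
Variable R : rcfType.

Lemma normc_ge0 (z : R[i]) : 0 <= nm z.
Proof. by case: z => a b; rewrite /= sqrtr_ge0. Qed.

Lemma normc_real (x : R) : nm x%:C = `|x|.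
Proof. by rewrite /= expr0n /= addr0 sqrtr_sqr. Qed.

Lemma normc_sum (I : Type) (r : seq I) (P : pred I) (F : I -> R[i]) :
  nm (\sum_(i <- r | P i) F i) <= \sum_(i <- r | P i) nm (F i).
Proof.
elim/big_rec2: _ => [|i y z _ yz]; first by rewrite Normc.normc0.
by apply: le_trans (le_normcD _ _) _; rewrite lerD2l.
Qed.

End ComplexModulus.

Definition vanishing (R : realType) (u : nat -> R[i]) : Prop :=
  forall e : R, 0 < e -> exists k0, forall k, (k0 <= k)%N -> nm (u k) < e.

Section VanishingSequences.
Variable R : realType.
Implicit Types (u w : nat -> R[i]) (c : R[i]).

Lemma vanishing0 : vanishing (fun=> 0 : R[i]).
Proof. by move=> e e0; exists 0%N => k _; rewrite Normc.normc0. Qed.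

Lemma vanishing_ext u w : (forall k, u k = w k) -> vanishing w -> vanishing u.
Proof. by move=> E h e /h [k0 Hk0]; exists k0 => k /Hk0; rewrite E. Qed.

Lemma vanishingD u w : vanishing u -> vanishing w -> vanishing (fun k => u k + w k).
Proof.
move=> hu hw e e0; have e2 : 0 < e / 2 by rewrite divr_gt0.
have [k1 H1] := hu _ e2; have [k2 H2] := hw _ e2.
exists (maxn k1 k2) => k; rewrite geq_max => /andP[/H1 u_small /H2 w_small].
by apply: le_lt_trans (le_normcD _ _) _; lra.
Qed.

Lemma vanishingM c u : vanishing u -> vanishing (fun k => c * u k).
Proof.
move=> hu e e0; have c0 := normc_ge0 c.
have e' : 0 < e / (nm c + 1) by rewrite divr_gt0 // ltr_wpDl.
have [k0 Hk0] := hu _ e'; exists k0 => k /Hk0 u_small.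
have ce : nm c * (e / (nm c + 1)) < e.
  by rewrite mulrA ltr_pdivrMr ?ltr_wpDl //; nra.
by rewrite Normc.normcM; apply: le_lt_trans ce; rewrite ler_wpM2l // ltW.
Qed.

Lemma vanishing_sum (I : Type) (r : seq I) (P : pred I) (F : I -> nat -> R[i]) :
  (forall i, vanishing (F i)) -> vanishing (fun k => \sum_(i <- r | P i) F i k).
Proof.
move=> hF; elim: r => [|i r IH].
  by apply: vanishing_ext vanishing0 => k; rewrite big_nil.
case Pi: (P i).
  by apply: vanishing_ext (vanishingD (hF i) IH) => k; rewrite big_cons Pi.
by apply: vanishing_ext IH => k; rewrite big_cons Pi.
Qed.

Lemma geometric_small (r c e : R) : 0 <= r -> r < 1 -> 0 <= c -> 0 < e ->
  exists J, r ^+ J * c < e.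
Proof.
move=> r0 r1 c0 e0.
have /cvgrPdist_lt /(_ (e / (c + 1))) : (fun J => r ^+ J) @ \oo --> (0 : R).
  by apply: cvg_expr; rewrite ger0_norm.
rewrite divr_gt0 ?ltr_wpDl // => /(_ isT) [J _ HJ].
exists J; have := HJ J (leqnn J); rewrite sub0r normrN ger0_norm ?exprn_ge0 //.
rewrite ltr_pdivlMr ?ltr_wpDl // => rJ.
by have := exprn_ge0 J r0; nra.
Qed.

(* A stable scalar recursion w(k+1) = mu w(k) + v(k) (|mu| < 1) driven by a
   vanishing input vanishes: after v is below e(1-|mu|)/2, w(k0+j) is bounded
   by |mu|^j |w(k0)| + e/2. *)
Lemma vanishing_first_order (mu : R[i]) w v : nm mu < 1 -> vanishing v ->
  (forall k, w k.+1 = mu * w k + v k) -> vanishing w.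
Proof.
move=> mu1 hv rec e e0; set m := nm mu; have m0 : 0 <= m := normc_ge0 mu.
have e1 : 0 < e * (1 - m) / 2 by rewrite divr_gt0 // mulr_gt0 // subr_gt0.
have [k0 Hk0] := hv _ e1; set c := nm (w k0); have c0 : 0 <= c := normc_ge0 _.
have bound j : nm (w (k0 + j)%N) <= m ^+ j * c + e / 2.
  elim: j => [|j IH]; first by rewrite addn0 expr0 mul1r /c; lra.
  rewrite addnS rec; apply: le_trans (le_normcD _ _) _.
  have := Hk0 (k0 + j)%N (leq_addr _ _); rewrite Normc.normcM -/m => v_small.
  by have := ler_wpM2l m0 IH; rewrite exprS; nra.
have e2 : 0 < e / 2 by rewrite divr_gt0.
have [J HJ] := geometric_small m0 mu1 c0 e2.
exists (k0 + J)%N => k hk; rewrite -(subnKC (leq_trans (leq_addr _ _) hk)).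
apply: le_lt_trans (bound _) _.
have : m ^+ (k - k0) <= m ^+ J.
  apply: ler_wiXn2l => //; first exact: ltW.
  by rewrite leq_subRL // (leq_trans (leq_addr _ _) hk).
by have := exprn_ge0 (k - k0) m0; nra.
Qed.

End VanishingSequences.

Definition mx_vanishing (R : realType) m n (U : nat -> 'M[R[i]]_(m, n)) : Prop :=
  forall i j, vanishing (fun k => U k i j).

Section VanishingMatrices.
Variable R : realType.
Local Notation C := (R[i]).

Lemma mx_vanishing0 m n : mx_vanishing (fun=> 0 : 'M[C]_(m, n)).
Proof. by move=> i j; apply: vanishing_ext (@vanishing0 R) => k; rewrite mxE. Qed.

Lemma mx_vanishing_ext m n (U W : nat -> 'M[C]_(m, n)) :
  (forall k, U k = W k) -> mx_vanishing W -> mx_vanishing U.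
Proof. by move=> E h i j; apply: vanishing_ext (h i j) => k; rewrite E. Qed.

Lemma mx_vanishingD m n (U W : nat -> 'M[C]_(m, n)) :
  mx_vanishing U -> mx_vanishing W -> mx_vanishing (fun k => U k + W k).
Proof. by move=> hu hw i j; apply: vanishing_ext (vanishingD (hu i j) (hw i j)) => k; rewrite mxE. Qed.

Lemma mx_vanishing_mull m n q (M : 'M[C]_(q, m)) (U : nat -> 'M[C]_(m, n)) :
  mx_vanishing U -> mx_vanishing (fun k => M *m U k).
Proof.
move=> hu i j; apply: (vanishing_ext (w := fun k => \sum_l M i l * U k l j)).
  by move=> k; rewrite mxE.
by apply: vanishing_sum => l; apply: vanishingM.
Qed.

Lemma mx_vanishing_mulr m n q (M : 'M[C]_(n, q)) (U : nat -> 'M[C]_(m, n)) :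
  mx_vanishing U -> mx_vanishing (fun k => U k *m M).
Proof.
move=> hu i j; apply: (vanishing_ext (w := fun k => \sum_l M l j * U k i l)).
  by move=> k; rewrite mxE; apply: eq_bigr => l _; rewrite mulrC.
by apply: vanishing_sum => l; apply: vanishingM.
Qed.

Lemma mx_vanishing_first_order m n (mu : C) (W V : nat -> 'M[C]_(m, n)) :
  nm mu < 1 -> mx_vanishing V ->
  (forall k, W k.+1 = mu *: W k + V k) -> mx_vanishing W.
Proof.
move=> mu1 hv rec i j; apply: (vanishing_first_order mu1 (hv i j)) => k.
by rewrite rec !mxE.
Qed.

Section StableRecursion.
Variables (n p : nat) (M : 'M[C]_n.+1).

(* Peeling off the factors M - z of a product one at a time: if
   prod_(z in t) (M - z) Z vanishes and every z in t is stable, so does Z,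
   since W = (M - z) Z satisfies the same recursion and Z(k+1) = z Z(k) + W(k) + V(k). *)
Lemma vanishing_of_annihilated (t : seq C) : (forall z, z \in t -> nm z < 1) ->
  forall Z V : nat -> 'M[C]_(n.+1, p), (forall k, Z k.+1 = M *m Z k + V k) ->
  mx_vanishing V -> mx_vanishing (fun k => (\prod_(z <- t) (M - z%:M)) *m Z k) ->
  mx_vanishing Z.
Proof.
elim/last_ind: t => [|t z IH] t_stable Z V rec hV hP.
  by apply: mx_vanishing_ext hP => k; rewrite big_nil mul1mx.
pose W k := (M - z%:M) *m Z k.
have recW k : W k.+1 = M *m W k + (M - z%:M) *m V k.
  by rewrite /W rec mulmxDr !mulmxA mulmxBl mulmxBr mul_scalar_mx mul_mx_scalar.
have hW : mx_vanishing W.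
  apply: (IH _ W _ recW (mx_vanishing_mull _ hV)).
    by move=> y yt; apply: t_stable; rewrite mem_rcons inE yt orbT.
  by apply: mx_vanishing_ext hP => k; rewrite big_rcons /= /W mulmxA.
have z_stable : nm z < 1 by apply: t_stable; rewrite mem_rcons mem_head.
apply: (mx_vanishing_first_order z_stable (mx_vanishingD hW hV)) => k.
rewrite rec /W mulmxBl mul_scalar_mx addrA; congr (_ + _).
by rewrite addrC subrK.
Qed.

(* A linear recursion Z(k+1) = M Z(k) + V(k) with M Schur stable and V
   vanishing has a vanishing solution: by Cayley-Hamilton the product of
   the factors M - z over the eigenvalues z annihilates M. *)
Lemma stable_recursion_vanishes : (forall l, eigenvalue M l -> nm l < 1) ->
  forall Z V : nat -> 'M[C]_(n.+1, p), (forall k, Z k.+1 = M *m Z k + V k) ->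
  mx_vanishing V -> mx_vanishing Z.
Proof.
move=> M_stable Z V rec hV.
have [s Hs] := closed_field_poly_normal (char_poly M).
rewrite (monicP (char_poly_monic M)) scale1r in Hs.
apply: (vanishing_of_annihilated (t := s) _ rec hV).
  by move=> z zs; apply: M_stable; rewrite eigenvalue_root_char Hs root_prod_XsubC.
have CH : \prod_(z <- s) (M - z%:M) = 0.
  rewrite -(Cayley_Hamilton M) Hs rmorph_prod; apply: eq_bigr => z _.
  by rewrite rmorphB /= horner_mx_X horner_mx_C.
apply: (mx_vanishing_ext (W := fun=> 0)) => [k|]; first by rewrite CH mul0mx.
exact: mx_vanishing0.
Qed.

End StableRecursion.

Lemma scale_stable n (M : 'M[C]_n.+1) (z : C) :
  (forall l, eigenvalue M l -> nm l <= 1) -> nm z < 1 ->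
  forall l, eigenvalue (z *: M) l -> nm l < 1.
Proof.
move=> M_disc z1 l /eigenvalueP [v Hv vn0].
have [z0|zn0] := eqVneq z 0.
  move: Hv; rewrite z0 scale0r mulmx0 => /esym /eqP.
  by rewrite scalemx_eq0 (negbTE vn0) orbF => /eqP ->; rewrite Normc.normc0.
have /M_disc lz_disc : eigenvalue M (l / z).
  apply/eigenvalueP; exists v => //.
  by apply: (scalerI zn0); rewrite scalemxAr Hv scalerA mulrC divfK.
rewrite -(divfK zn0 l) Normc.normcM.
by have := normc_ge0 z; have := normc_ge0 (l / z); nra.
Qed.

(* Multiplying on the
   right by Dt - z commutes with the recursion, and xi(k+1) = (z M) xi(k) + ...
   is a stable recursion by [scale_stable]. *)
Lemma sylvester_recursion_vanishes n N (M : 'M[C]_n.+1) (Dt : 'M[C]_N) :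
  (forall l, eigenvalue M l -> nm l <= 1) ->
  forall t : seq C, (forall z, z \in t -> nm z < 1) ->
  forall xi V : nat -> 'M[C]_(n.+1, N),
  (forall k, xi k.+1 = M *m xi k *m Dt + V k) -> mx_vanishing V ->
  mx_vanishing (fun k => xi k *m \prod_(z <- t) (Dt - z%:M)) -> mx_vanishing xi.
Proof.
move=> M_disc; elim=> [|z t IH] t_stable xi V rec hV hP.
  by apply: mx_vanishing_ext hP => k; rewrite big_nil mulmx1.
pose W k := xi k *m (Dt - z%:M).
have recW k : W k.+1 = M *m W k *m Dt + V k *m (Dt - z%:M).
  rewrite /W rec mulmxDl -!mulmxA; congr (_ *m _ + _).
  by rewrite mulmxBr mulmxBl mul_mx_scalar mul_scalar_mx.
have hW : mx_vanishing W.
  apply: (IH _ W _ recW (mx_vanishing_mulr _ hV)).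
    by move=> y yt; apply: t_stable; rewrite inE yt orbT.
  by apply: mx_vanishing_ext hP => k; rewrite big_cons /W mulmxA.
have z_stable : nm z < 1 by apply: t_stable; rewrite mem_head.
apply: (stable_recursion_vanishes (scale_stable M_disc z_stable) _
          (mx_vanishingD (mx_vanishing_mull M hW) hV)) => k.
rewrite rec /W mulmxA mulmxBr mul_mx_scalar -scalemxAl addrA.
by congr (_ + _); rewrite addrC subrK.
Qed.

End VanishingMatrices.

Lemma exists_argmax (R : realDomainType) N (f : 'I_N.+1 -> R) :
  exists i, forall j, f j <= f i.
Proof. by case: (@arg_maxP _ _ _ ord0 xpredT f isT) => i _ Hi; exists i => j; apply: Hi. Qed.

Section RowStochastic.
Variables (R : realFieldType) (N' : nat) (a : 'M[R]_N'.+1).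
Hypothesis adj : adjacency a.
Local Notation N := N'.+1.
Local Notation D := (Dmat a).

Lemma din_ge0 i : 0 <= din a i.
Proof. by rewrite /din sumr_ge0 // => j _; case: adj. Qed.

Lemma Dmat_den_gt0 i : 0 < 1 + din a i.
Proof. by rewrite ltr_pwDl ?din_ge0. Qed.

Lemma DmatE i j : D i j = ((i == j)%:R + a i j) / (1 + din a i).
Proof.
rewrite mxE; case: eqP => [->|_]; last by rewrite add0r.
by case: adj => _ ->; rewrite addr0 div1r.
Qed.

Lemma Dmat_ge0 i j : 0 <= D i j.
Proof.
have a0 : 0 <= a i j by case: adj.
by rewrite DmatE divr_ge0 ?addr_ge0 ?ler0n ?din_ge0.
Qed.

Lemma Dmat_diag_gt0 i : 0 < D i i.
Proof. by rewrite DmatE eqxx; case: adj => _ ->; rewrite addr0 div1r invr_gt0 Dmat_den_gt0. Qed.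

Lemma Dmat_edge_gt0 i j : 0 < a i j -> 0 < D i j.
Proof. by move=> aij; rewrite DmatE divr_gt0 ?Dmat_den_gt0 // ltr_wpDl ?ler0n. Qed.

Lemma Dmat_rowsum i : \sum_j D i j = 1.
Proof.
under eq_bigr do rewrite DmatE.
rewrite -mulr_suml big_split /= -/(din a i) (bigD1 i) //= eqxx.
rewrite big1 ?addr0 ?divff ?gt_eqF ?Dmat_den_gt0 // => j.
by rewrite eq_sym => /negbTE ->.
Qed.

Lemma max_spread (f : 'I_N -> R) i : (forall j, f j <= f i) ->
  \sum_j D i j * f j = f i -> forall j, 0 < D i j -> f j = f i.
Proof.
move=> f_max f_harm j Dij.
have gaps0 : \sum_k D i k * (f i - f k) = 0.
  under eq_bigr do rewrite mulrBr.
  by rewrite sumrB -mulr_suml Dmat_rowsum mul1r f_harm subrr.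
have gaps_ge0 k : xpredT k -> 0 <= D i k * (f i - f k).
  by move=> _; rewrite mulr_ge0 ?Dmat_ge0 // subr_ge0.
move/eqP: (@psumr_eq0P _ _ xpredT (fun k => D i k * (f i - f k)) gaps_ge0 gaps0 j isT).
by rewrite mulf_eq0 (gt_eqF Dij) /= subr_eq0 => /eqP <-.
Qed.

(* A D-harmonic function with a drift c (f = D f + c) has c = 0: at a
   maximum of f the weighted average of f is at most f. *)
Lemma harmonic_drift0 (f : 'I_N -> R) c :
  (forall i, \sum_j D i j * f j = f i - c) -> c = 0.
Proof.
have drift_ge0 g d : (forall i, \sum_j D i j * g j = g i - d) -> 0 <= d.
  move=> g_harm; have [im g_max] := exists_argmax g.
  have : \sum_j D im j * g j <= \sum_j D im j * g im.
    by apply: ler_sum => j _; rewrite ler_wpM2l ?Dmat_ge0.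
  by rewrite -mulr_suml Dmat_rowsum mul1r g_harm; lra.
move=> f_harm; have c_ge0 := drift_ge0 _ _ f_harm.
suff : 0 <= - c by lra.
apply: (drift_ge0 (fun j => - f j)) => i.
under eq_bigr do rewrite mulrN.
by rewrite sumrN f_harm; lra.
Qed.

Hypothesis tree : has_spanning_tree a.

(* Global maximum principle: a D-harmonic function attains its maximum at the
   root, since the maximum propagates along parent edges down to the root. *)
Lemma harmonic_max_at_root (r : 'I_N) (par : 'I_N -> 'I_N) :
  (forall i, i != r -> 0 < a i (par i)) -> (forall i, exists k, iter k par i = r) ->
  forall f : 'I_N -> R, (forall i, \sum_j D i j * f j = f i) ->
  forall i, f i <= f r.
Proof.
move=> par_edge reach f f_harm.
have [im f_max] := exists_argmax f.
suff -> : f r = f im by [].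
have along k : f (iter k par im) = f im \/ f r = f im.
  elim: k => [|k [IH|IH]]; [by left | | by right].
  have [E|ne] := eqVneq (iter k par im) r; first by right; rewrite -E.
  left; rewrite iterS -IH.
  apply: (max_spread _ (f_harm _) (Dmat_edge_gt0 (par_edge _ ne))) => j.
  by rewrite IH.
have [k root_k] := reach im.
by case: (along k) => //; rewrite root_k.
Qed.

Lemma harmonic_const (f : 'I_N -> R) : (forall i, \sum_j D i j * f j = f i) ->
  forall i j, f i = f j.
Proof.
move=> f_harm; have [r [par [par_edge reach]]] := tree.
have fN_harm i : \sum_j D i j * (- f j) = - f i.
  by under eq_bigr do rewrite mulrN; rewrite sumrN f_harm.
have max_f := harmonic_max_at_root par_edge reach f_harm.
have min_f := harmonic_max_at_root par_edge reach fN_harm.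
have f_root i : f i = f r by apply/eqP; rewrite eq_le max_f /= -lerN2 min_f.
by move=> i j; rewrite !f_root.
Qed.

(* Hence the disagreement vector e_i - e_j lies in the range of (1 - D)^T:
   the left kernel of 1 - D (the constants) is orthogonal to it. *)
Lemma disagreement_in_range (i j : 'I_N) : exists g : 'cV[R]_N,
  delta_mx i 0 - delta_mx j 0 = (1 - D)^T *m g.
Proof.
set L := 1 - D.
have coker_const k : forall l l', cokermx L l k = cokermx L l' k.
  apply: harmonic_const => l.
  have /eqP := mulmx_coker L; rewrite /L mulmxBl mul1mx subr_eq0 => /eqP E.
  by rewrite [in RHS]E mxE.
have : ((delta_mx 0 i - delta_mx 0 j : 'rV[R]_N) <= L)%MS.
  rewrite submxE mulmxBl -!rowE; apply/eqP/matrixP => r k.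
  by have := coker_const k i j; rewrite !mxE => ->; rewrite subrr.
case/submxP => g Hg; exists g^T.
by rewrite -trmx_mul -Hg linearB /= !trmx_delta.
Qed.

End RowStochastic.

Section Gershgorin.
Variable R : rcfType.
Local Notation C := (R[i]).

Lemma gershgorin N (M : 'M[C]_N.+1) (l : C) : eigenvalue M l ->
  exists j, nm (l - M j j) <= \sum_(i | i != j) nm (M i j).
Proof.
case/eigenvalueP => v eig_v v_neq0.
have [j v_max] := exists_argmax (fun i => nm (v 0 i)).
exists j; set m := nm (v 0 j).
have m_gt0 : 0 < m.
  rewrite lt_def normc_ge0 andbT; apply: contra v_neq0 => /eqP m0.
  apply/eqP/matrixP => i k; rewrite (ord1 i) mxE; apply: Normc.eq0_normc.
  by apply/eqP; rewrite eq_le normc_ge0 andbT -m0 v_max.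
have row_j : (l - M j j) * v 0 j = \sum_(i | i != j) v 0 i * M i j.
  have := congr1 (fun w : 'rV_N.+1 => w 0 j) eig_v; rewrite !mxE (bigD1 j) //= => eq_j.
  by rewrite mulrBl -eq_j; set s := \sum_(i | _) _; ring.
rewrite -(ler_pM2r m_gt0) -Normc.normcM row_j mulr_suml.
apply: le_trans (normc_sum _ _ _) _; apply: ler_sum => i _.
by rewrite Normc.normcM mulrC ler_wpM2l ?normc_ge0 ?v_max.
Qed.

Lemma tangent_disc (d : R) (l : C) : 0 < d -> nm (l - d%:C) <= 1 - d ->
  l = 1 \/ nm l < 1.
Proof.
case: l => x y d_gt0; rewrite /= subr0.
set q := Num.sqrt _; set q' := Num.sqrt _ => in_disc.
have [l_lt1|l_ge1] := ltP q' 1; [by right | left].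
have q_sqr : q ^+ 2 = (x - d) ^+ 2 + y ^+ 2 by rewrite sqr_sqrtr ?addr_ge0 ?sqr_ge0.
have q'_sqr : q' ^+ 2 = x ^+ 2 + y ^+ 2 by rewrite sqr_sqrtr ?addr_ge0 ?sqr_ge0.
have q_ge0 : 0 <= q := sqrtr_ge0 _.
have x1 : x = 1 by nra.
have y0 : y = 0 by nra.
by rewrite x1 y0.
Qed.

End Gershgorin.

Section SpectrumOfDt.
Variables (R : rcfType) (N' : nat) (a : 'M[R]_N'.+1).
Hypotheses (adj : adjacency a) (tree : has_spanning_tree a).
Local Notation N := N'.+1.
Local Notation C := (R[i]).
Local Notation D := (Dmat a).
(* Dt acts on row vectors of agent values as D acts on columns. *)
Local Notation Dt := ((cmx D)^T).

Lemma Dt_action (w : 'rV[C]_N) j : (w *m Dt) 0 j = \sum_i (D j i)%:C * w 0 i.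
Proof. by rewrite mxE; apply: eq_bigr => i _; rewrite !mxE mulrC. Qed.

Lemma Dt_action_parts (w : 'rV[C]_N) j :
  complex.Re ((w *m Dt) 0 j) = \sum_i D j i * complex.Re (w 0 i) /\
  complex.Im ((w *m Dt) 0 j) = \sum_i D j i * complex.Im (w 0 i).
Proof.
rewrite Dt_action (raddf_sum (@complex.Re R : Rcomplex R -> R)).
rewrite (raddf_sum (@complex.Im R : Rcomplex R -> R)).
by split; apply: eq_bigr => i _; case: (w 0 i) => u v /=; rewrite mul0r ?subr0 ?addr0.
Qed.

Lemma Dt_drift0 (w : 'rV[C]_N) c : (forall j, (w *m Dt) 0 j = w 0 j - c) -> c = 0.
Proof.
move=> w_drift.
have [Re_drift Im_drift] : (forall j, \sum_i D j i * complex.Re (w 0 i) =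
                                     complex.Re (w 0 j) - complex.Re c) /\
                           (forall j, \sum_i D j i * complex.Im (w 0 i) =
                                     complex.Im (w 0 j) - complex.Im c).
  split=> j; have [Re_j Im_j] := Dt_action_parts w j.
    by rewrite -Re_j w_drift; move: (w 0 j) (c) => [? ?] [? ?].
  by rewrite -Im_j w_drift; move: (w 0 j) (c) => [? ?] [? ?].
move: (harmonic_drift0 adj Re_drift) (harmonic_drift0 adj Im_drift).
by clear w_drift Re_drift Im_drift; case: c => u v /= -> ->.
Qed.

Lemma Dt_fixed_const (w : 'rV[C]_N) : w *m Dt = w -> forall j, w 0 j = w 0 ord0.
Proof.
move=> w_fixed j.
have [Re_harm Im_harm] : (forall j, \sum_i D j i * complex.Re (w 0 i) = complex.Re (w 0 j)) /\
                         (forall j, \sum_i D j i * complex.Im (w 0 i) = complex.Im (w 0 j)).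
  by split=> k; have [Re_k Im_k] := Dt_action_parts w k; rewrite -?Re_k -?Im_k w_fixed.
move: (harmonic_const adj tree Im_harm j ord0) (harmonic_const adj tree Re_harm j ord0).
by case: (w 0 j) => ? ?; case: (w 0 ord0) => ? ? /= -> ->.
Qed.

(* The eigenvalue 1 of Dt is semisimple: u (1 - Dt)^2 = 0 implies u (1 - Dt) = 0.
   Indeed w = u (1 - Dt) is fixed by Dt, hence constant equal to c, and then
   u Dt = u - c 1 forces c = 0. *)
Lemma Dt_eigenvalue1_semisimple (u : 'rV[C]_N) :
  u *m (1 - Dt) *m (1 - Dt) = 0 -> u *m (1 - Dt) = 0.
Proof.
set w := u *m (1 - Dt) => w_ker.
have w_fixed : w *m Dt = w.
  by move/eqP: w_ker; rewrite mulmxBr mulmx1 subr_eq0 eq_sym => /eqP.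
have w_const := Dt_fixed_const w_fixed.
have u_drift j : (u *m Dt) 0 j = u 0 j - w 0 ord0.
  by rewrite -(w_const j) /w mulmxBr mulmx1 !mxE opprB addrC subrK.
have c0 := Dt_drift0 u_drift.
by apply/matrixP => i j; rewrite (ord1 i) w_const c0 mxE.
Qed.

(* Every eigenvalue of Dt other than 1 lies in the open unit disc:
   by Gershgorin it lies in a disc centred at D j j > 0 of radius 1 - D j j. *)
Lemma Dt_eigenvalue (l : C) : eigenvalue Dt l -> l = 1 \/ nm l < 1.
Proof.
case/gershgorin => j l_in_disc; apply: (tangent_disc (Dmat_diag_gt0 adj j)).
have offdiag : \sum_(i | i != j) nm (Dt i j) = 1 - D j j.
  have := Dmat_rowsum adj j; rewrite (bigD1 j) //= => <-; rewrite addrC addrK.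
  by apply: eq_bigr => i _; rewrite 2!mxE normc_real ger0_norm ?Dmat_ge0.
by rewrite -offdiag; move: l_in_disc; rewrite 2!mxE.
Qed.

(* By semisimplicity, a row vector killed by a power of Dt - 1 is killed
   by 1 - Dt. *)
Lemma Dt_unit_factors (r : seq C) : (forall z, z \in r -> z = 1) ->
  forall u : 'rV[C]_N, u *m \prod_(z <- r) (Dt - z%:M) = 0 -> u *m (1 - Dt) = 0.
Proof.
elim: r => [|z r IH] r_one u.
  by rewrite big_nil mulmx1 => ->; rewrite mul0mx.
have r_one' y : y \in r -> y = 1 by move=> yr; apply: r_one; rewrite inE yr orbT.
rewrite big_cons (r_one z (mem_head _ _)) mulmxA => /(IH r_one') u_ker.
apply: Dt_eigenvalue1_semisimple.
have -> : u *m (1 - Dt) = - (u *m (Dt - 1%:M)) by rewrite -mulmxN opprB.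
by rewrite mulNmx u_ker oppr0.
Qed.

(* A polynomial annihilating 1 - Dt whose roots are all stable: the
   factors of the characteristic polynomial of Dt at eigenvalues z != 1
   (the eigenvalue 1 being semisimple). *)
Lemma Dt_annihilating : exists t : seq C, (forall z, z \in t -> nm z < 1) /\
  (1 - Dt) *m \prod_(z <- t) (Dt - z%:M) = 0.
Proof.
have [s Hs] := closed_field_poly_normal (char_poly Dt).
rewrite (monicP (char_poly_monic Dt)) scale1r in Hs.
have eval_factors (P : pred C) : horner_mx Dt (\prod_(z <- s | P z) ('X - z%:P)) =
    \prod_(z <- [seq z <- s | P z]) (Dt - z%:M).
  by rewrite rmorph_prod big_filter; apply: eq_bigr => z _;
     rewrite rmorphB /= horner_mx_X horner_mx_C.
exists [seq z <- s | z != 1]; split.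
  move=> z; rewrite mem_filter => /andP [z_neq1 zs].
  have : eigenvalue Dt z by rewrite eigenvalue_root_char Hs root_prod_XsubC.
  by case/Dt_eigenvalue => // /eqP; rewrite (negbTE z_neq1).
set P := \prod_(z <- _) _.
have CH : P *m \prod_(z <- [seq z <- s | ~~ (z != 1)]) (Dt - z%:M) = 0.
  have := Cayley_Hamilton Dt; rewrite Hs (bigID (fun z => z != 1)) /= rmorphM /=.
  by rewrite !eval_factors.
have P_ker : P *m (1 - Dt) = 0.
  apply/row_matrixP => i; rewrite row_mul row0.
  apply: (Dt_unit_factors (r := [seq z <- s | ~~ (z != 1)])).
    by move=> z; rewrite mem_filter => /andP [/negPn /eqP].
  by rewrite -row_mul CH row0.
have P_comm : GRing.comm (1 - Dt) P.
  have -> : 1 - Dt = horner_mx Dt (1 - 'X) by rewrite rmorphB /= rmorph1 horner_mx_X.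
  by rewrite /P -eval_factors; exact: comm_horner_mx2.
by rewrite [_ *m _]P_comm.
Qed.

End SpectrumOfDt.

(* Composite
   factors such as 1 - Dt are generalized beforehand so that they stay atoms. *)
Local Ltac mx_ring :=
  rewrite ?(mulmxBl, mulmxDl, mulmxBr, mulmxDr, mulNmx, mulmxN) -?mulmxA;
  apply/matrixP => i j; rewrite !mxE; ring.

Section ClosedLoop.
Variables (R : realType) (n N : nat).
Local Notation C := (R[i]).
Variables (A BK HC : 'M[C]_n.+1) (Dt : 'M[C]_N) (t : seq C).
Hypotheses (A_disc : forall l, eigenvalue A l -> nm l <= 1)
  (BK_stable : forall l, eigenvalue (A - BK) l -> nm l < 1)
  (HC_stable : forall l, eigenvalue (A - HC) l -> nm l < 1)
  (t_stable : forall z, z \in t -> nm z < 1)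
  (t_annihilates : (1 - Dt) *m \prod_(z <- t) (Dt - z%:M) = 0).
Variables X E Xh : nat -> 'M[C]_(n.+1, N).
Hypotheses
  (recX : forall k, X k.+1 = A *m X k - BK *m E k)
  (recE : forall k, E k.+1 = A *m E k - BK *m E k + A *m Xh k - A *m (E k *m (1 - Dt)))
  (recXh : forall k, Xh k.+1 = A *m Xh k - BK *m (E k *m (1 - Dt))
                               + HC *m (X k *m (1 - Dt)) - HC *m Xh k).
Local Notation L := (1 - Dt).

(* The observer estimates the relative output X L: the error e = X L - Xh
   obeys e(k+1) = (A - HC) e(k). *)
Lemma estimation_error_vanishes : mx_vanishing (fun k => X k *m L - Xh k).
Proof.
apply: (stable_recursion_vanishes HC_stable (V := fun=> 0)); last exact: mx_vanishing0.
by move=> k; rewrite recX recXh addr0; mx_ring.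
Qed.

(* The relative protocol error xi = X L - E L obeys the two-sided recursion
   xi(k+1) = A xi(k) Dt + A e(k) L, driven by the vanishing estimation error. *)
Lemma protocol_error_vanishes : mx_vanishing (fun k => X k *m L - E k *m L).
Proof.
have Dt_right (M : 'M[C]_(n.+1, N)) : M *m Dt = M - M *m L.
  by rewrite mulmxBr mulmx1 opprB addrC subrK.
apply: (@sylvester_recursion_vanishes R n N A Dt A_disc t t_stable _
         (fun k => A *m (X k *m L - Xh k) *m L)).
- by move=> k /=; rewrite Dt_right recX recE; move: L => L'; mx_ring.
- exact/mx_vanishing_mulr/mx_vanishing_mull/estimation_error_vanishes.
- apply: (mx_vanishing_ext (W := fun=> 0)); last exact: mx_vanishing0.
  by move=> k; rewrite -mulmxBl -mulmxA t_annihilates mulmx0.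
Qed.

(* Finally X L(k+1) = (A - BK) X L(k) + BK xi(k) is a stable recursion
   driven by the vanishing protocol error. *)
Lemma relative_state_vanishes : mx_vanishing (fun k => X k *m L).
Proof.
apply: (stable_recursion_vanishes BK_stable
         (V := fun k => BK *m (X k *m L - E k *m L))).
  by move=> k; rewrite recX; move: L => L'; mx_ring.
exact/mx_vanishing_mull/protocol_error_vanishes.
Qed.

End ClosedLoop.

Lemma cvg0_of_vanishing (R : realType) n (v : nat -> 'cV[R]_n) :
  mx_vanishing (fun k => map_mx (real_complex R) (v k)) -> v @ \oo --> (0 : 'cV[R]_n).
Proof.
move=> v_van; apply/cvgrPdist_lt => e e0.
have entry_small (rc : 'I_n * 'I_1) :
    exists k0, forall k, (k0 <= k)%N -> `|v k rc.1 rc.2| < e.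
  by have [k0 Hk0] := v_van rc.1 rc.2 e e0; exists k0 => k /Hk0; rewrite mxE normc_real.
have [k0 Hk0] := fin_all_exists entry_small.
exists (\max_rc k0 rc) => // k /= k_large; rewrite sub0r normrN.
change (mx_norm (v k) < e).
have [->|nz] := eqVneq (mx_norm (v k)) 0; first by [].
have [rc ->] := mx_norm_neq0 nz.
by apply: Hk0; apply: leq_trans k_large; exact: leq_bigmax.
Qed.

Definition stack (R : ringType) n N (f : 'I_N -> 'cV[R]_n) : 'M[R]_(n, N) :=
  \matrix_(r, l) f l r 0.

Section Stacking.
Variables (R : ringType) (n N : nat).
Implicit Types f g : 'I_N -> 'cV[R]_n.

Lemma stackD f g : stack (fun l => f l + g l) = stack f + stack g.
Proof. by apply/matrixP => r l; rewrite !mxE. Qed.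

Lemma stackB f g : stack (fun l => f l - g l) = stack f - stack g.
Proof. by apply/matrixP => r l; rewrite !mxE. Qed.

Lemma stack_mull q (M : 'M[R]_(q, n)) f : stack (fun l => M *m f l) = M *m stack f.
Proof. by apply/matrixP => r l; rewrite !mxE; apply: eq_bigr => s _; rewrite mxE. Qed.

Lemma stack_difference f (i j : 'I_N) :
  f i - f j = stack f *m (delta_mx i 0 - delta_mx j 0).
Proof. by rewrite mulmxBr -!colE; apply/matrixP => r c; rewrite (ord1 c) !mxE. Qed.

End Stacking.

Lemma stack_disagreement (R : comRingType) n N (D : 'M[R]_N) (f : 'I_N -> 'cV[R]_n) :
  (forall l, \sum_j D l j = 1) ->
  stack (fun l => \sum_j D l j *: (f l - f j)) = stack f *m (1 - D)^T.
Proof.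
move=> D_rowsum; apply/matrixP => r l.
rewrite linearB /= trmx1 mulmxBr mulmx1 !mxE summxE.
under eq_bigr do rewrite !mxE mulrBr.
rewrite sumrB -mulr_suml D_rowsum mul1r; congr (_ - _).
by apply: eq_bigr => s _; rewrite !mxE mulrC.
Qed.

Section Complexification.
Variable R : realType.
Local Notation cx := (map_mx (real_complex R)).

Lemma schur_stable_normc n (M : 'M[R]_n) :
  schur_stable M -> forall l, eigenvalue (cx M) l -> nm l < 1.
Proof. by move=> M_stable l /M_stable; rewrite -[1]/(real_complex R 1) ltcR. Qed.

Lemma closed_disc_normc n (M : 'M[R]_n) :
  eigs_in_closed_unit_disc M -> forall l, eigenvalue (cx M) l -> nm l <= 1.
Proof. by move=> M_disc l /M_disc; rewrite -[1]/(real_complex R 1) lecR. Qed.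

End Complexification.

Section Protocol.
Variables (R : realType) (n' m p N' : nat).
Local Notation n := n'.+1.
Local Notation N := N'.+1.
Local Notation cx := (map_mx (real_complex R)).
Variables (A : 'M[R]_n) (B : 'M[R]_(n, m)) (C : 'M[R]_(p, n))
  (K : 'M[R]_(m, n)) (H : 'M[R]_(n, p)) (a : 'M[R]_N).
Hypotheses (A_disc : eigs_in_closed_unit_disc A)
  (BK_stable : schur_stable (A - B *m K)) (HC_stable : schur_stable (A - H *m C))
  (adj : adjacency a) (tree : has_spanning_tree a).
Local Notation D := (Dmat a).
Variables (x eta xhat : 'I_N -> nat -> 'cV[R]_n) (u : 'I_N -> nat -> 'cV[R]_m).
Hypotheses
  (hx : forall i k, x i k.+1 = A *m x i k + B *m u i k)
  (heta : forall i k, eta i k.+1 = A *m eta i k + B *m u i k + A *m xhat i k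
            - A *m \sum_(j < N) D i j *: (eta i k - eta j k))
  (hxhat : forall i k, xhat i k.+1 = A *m xhat i k
            - B *m K *m \sum_(j < N) D i j *: (eta i k - eta j k)
            + H *m (\sum_(j < N) D i j *: (C *m x i k - C *m x j k) - C *m xhat i k))
  (hu : forall i k, u i k = - (K *m eta i k)).

Let X k := stack (x ^~ k).
Let E k := stack (eta ^~ k).
Let Xh k := stack (xhat ^~ k).
Let L := (1 - D)^T.

Lemma stack_neighbour_disagreement (f : 'I_N -> 'cV[R]_n) :
  stack (fun l => \sum_j D l j *: (f l - f j)) = stack f *m L.
Proof. exact/stack_disagreement/(Dmat_rowsum adj). Qed.

Lemma stacked_state k : X k.+1 = A *m X k - (B *m K) *m E k.
Proof.
rewrite /X /E -!stack_mull -stackB; congr stack; apply/funext => l.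
by rewrite hx hu mulmxN mulmxA.
Qed.

Lemma stacked_eta k :
  E k.+1 = A *m E k - (B *m K) *m E k + A *m Xh k - A *m (E k *m L).
Proof.
rewrite /E /Xh -stack_neighbour_disagreement -!stack_mull -stackB -stackD -stackB.
by congr stack; apply/funext => l; rewrite heta hu mulmxN mulmxA.
Qed.

Lemma stacked_xhat k : Xh k.+1 = A *m Xh k - (B *m K) *m (E k *m L)
  + (H *m C) *m (X k *m L) - (H *m C) *m Xh k.
Proof.
rewrite /X /E /Xh -!stack_neighbour_disagreement -!stack_mull -stackB -stackD -stackB.
congr stack; apply/funext => l.
rewrite hxhat mulmxBr addrA -!mulmxA; congr (_ + _ - _); congr (_ *m _).
rewrite mulmx_sumr; apply: eq_bigr => j _.
by rewrite -mulmxBr scalemxAr.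
Qed.

Lemma cx_L : cx L = 1 - (cmx D)^T.
Proof. by rewrite -map_trmx map_mxB map_mx1 linearB /= trmx1. Qed.

(* The complexified relative state (X L) vanishes: the stacked closed loop is
   the one of section ClosedLoop with Dt = (cmx D)^T. *)
Lemma stacked_relative_state_vanishes : mx_vanishing (fun k => cx (X k *m L)).
Proof.
have [t [t_stable t_annihilates]] := Dt_annihilating adj tree.
have hBK l : eigenvalue (cx A - cx (B *m K)) l -> nm l < 1.
  by rewrite -map_mxB; exact: (schur_stable_normc BK_stable).
have hHC l : eigenvalue (cx A - cx (H *m C)) l -> nm l < 1.
  by rewrite -map_mxB; exact: (schur_stable_normc HC_stable).
apply: (mx_vanishing_ext _ (relative_state_vanishes (closed_disc_normc A_disc)
          hBK hHC t_stable t_annihilates (X := cx \o X) (E := cx \o E) (Xh := cx \o Xh) _ _ _)).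
- by move=> k; rewrite map_mxM cx_L.
- by move=> k; rewrite /= stacked_state map_mxB !map_mxM.
- by move=> k; rewrite /= stacked_eta !(map_mxB, map_mxD, map_mxM) cx_L.
- by move=> k; rewrite /= stacked_xhat !(map_mxB, map_mxD, map_mxM) cx_L.
Qed.

(* Synchronization: x_i - x_j = X (e_i - e_j) = (X L) g for some g. *)
Lemma protocol_synchronizes (i j : 'I_N) :
  (fun k => x i k - x j k) @ \oo --> (0 : 'cV[R]_n).
Proof.
have [g Hg] := disagreement_in_range adj tree i j.
apply: cvg0_of_vanishing.
apply: (mx_vanishing_ext _ (mx_vanishing_mulr (cx g) stacked_relative_state_vanishes)).
by move=> k /=; rewrite (stack_difference (x ^~ k)) Hg mulmxA map_mxM.
Qed.

End Protocol.

Unset Implicit Arguments.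
Local Close Scope complex_scope.

(* The protocol synchronizes every network containing a directed spanning
   tree; stabilizability and detectability only guarantee that K and H exist.
   A zero-dimensional state space is trivially synchronized. *)
Theorem theorem2 (R : realType) (n m p : nat)
  (A : 'M[R]_n) (B : 'M[R]_(n, m)) (C : 'M[R]_(p, n))
  (K : 'M[R]_(m, n)) (H : 'M[R]_(n, p)) :
  eigs_in_closed_unit_disc A ->
  stabilizable A B ->
  detectable C A ->
  schur_stable (A - B *m K) ->
  schur_stable (A - H *m C) ->
  forall (N : nat) (a : 'M[R]_N),
  (2 <= N)%N ->
  adjacency a ->
  has_spanning_tree a ->
  forall (x eta xhat : 'I_N -> nat -> 'cV[R]_n) (u : 'I_N -> nat -> 'cV[R]_m),
  let d := Dmat a in
  let y i k := C *m x i k in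
  let zeta i k := \sum_(j < N) d i j *: (y i k - y j k) in
  let zetahat i k := \sum_(j < N) d i j *: (eta i k - eta j k) in
  (forall i k, x i k.+1 = A *m x i k + B *m u i k) ->
  (forall i k, eta i k.+1 =
     A *m eta i k + B *m u i k + A *m xhat i k - A *m zetahat i k) ->
  (forall i k, xhat i k.+1 =
     A *m xhat i k - B *m K *m zetahat i k + H *m (zeta i k - C *m xhat i k)) ->
  (forall i k, u i k = - (K *m eta i k)) ->
  forall i j : 'I_N, (fun k => x i k - x j k) @ \oo --> (0 : 'cV[R]_n).
Proof.
move: A B C K H; case: n => [|n'] A B C K H A_disc _ _ BK_stable HC_stable N a.
  move=> _ _ _ x eta xhat u d y zeta zetahat _ _ _ _ i j.
  have -> : (fun k => x i k - x j k) = fun=> 0 by apply: funext => k; apply: flatmx0.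
  exact: cvg_cst.
case: N a => [|N'] a // _ adj tree x eta xhat u d y zeta zetahat hx heta hxhat hu.
exact: (protocol_synchronizes A_disc BK_stable HC_stable adj tree hx heta hxhat hu).
Qed.
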